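(* Let $\mathcal{F}$ be a $3$-uniform linear family and let $\mathcal{M}$ be a matching (not necessarily maximum) of $\mathcal{F}$ with $n=|\mathcal{M}|\geq 3$. If $|D_2(A,B,C)|\leq 21$ for all $3$-element subsets $\{A,B,C\}\subseteq\mathcal{M}$, then $|D_2(\mathcal{F},\mathcal{M})|+|D_3(\mathcal{F},\mathcal{M})\setminus\mathcal{M}|\leq\frac{23}{n-2}\binom{n}{3}$.
   Context: A family is a finite collection of distinct subsets of a vertex set; $3$-uniform means every member has exactly $3$ elements and linear means any two distinct members share at most one vertex. A matching is a collection of pairwise disjoint members. $X_{\mathcal{M}}=\bigcup_{A\in\mathcal{M}}A$. For $i\in\{0,1,2,3\}$, $D_i(\mathcal{F},\mathcal{M})=\{E\in\mathcal{F}:|E\cap X_{\mathcal{M}}|=i\}$. For $\{A,B,C\}\subseteq\mathcal{M}$, $D_2(A,B,C)=\{E\in D_2(\mathcal{F},\mathcal{M}):|E\cap(A\cup B\cup C)|=2\}$. *)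

From mathcomp Require Import all_boot all_order all_algebra.
Set Implicit Arguments. Unset Strict Implicit. Unset Printing Implicit Defensive.

Section Families.
Variable T : finType.

Definition uniform3 (F : {set {set T}}) : Prop := forall E, E \in F -> #|E| = 3.

Definition linear_family (F : {set {set T}}) : Prop :=
  forall E E', E \in F -> E' \in F -> E != E' -> #|E :&: E'| <= 1.

Definition matching_of (F M : {set {set T}}) : Prop :=
  M \subset F /\ forall A B, A \in M -> B \in M -> A != B -> [disjoint A & B].

Definition XM (M : {set {set T}}) : {set T} := \bigcup_(A in M) A.

Definition Di (F M : {set {set T}}) (i : nat) : {set {set T}} :=
  [set E in F | #|E :&: XM M| == i].

Definition D2abc (F M : {set {set T}}) (A B C : {set T}) : {set {set T}} :=
  [set E in Di F M 2 | #|E :&: (A :|: B :|: C)| == 2].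

End Families.

From mathcomp Require Import all_boot all_order all_algebra zify.
Set Implicit Arguments. Unset Strict Implicit. Unset Printing Implicit Defensive.

(* Each edge of D_2 meets exactly two members of M and each edge of D_3 \ M
   exactly three.  By linearity an edge meeting two distinct members A, B of
   M is determined by its vertices in A and in B, so at most |A||B| = 9 edges
   meet both; counting (edge, pair of members met) gives
   |D_2| + 3|D_3 \ M| <= 9 C(n,2).  An edge of D_2 lies in D_2(A,B,C) for
   each of the n-2 triples containing its two members, so counting
   (edge, triple) gives (n-2)|D_2| <= 21 C(n,3).  Adding a third of the first
   inequality to two thirds of the second, and using
   3 C(n,3) = (n-2) C(n,2), yields the bound 23 C(n,3)/(n-2). *)

Lemma double_counting (I J : finType) (X : {set I}) (Y : {set J}) (R : I -> J -> bool) :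
  \sum_(i in X) #|[set j in Y | R i j]| = \sum_(j in Y) #|[set i in X | R i j]|.
Proof.
under eq_bigr do rewrite -sum1dep_card.
under [RHS]eq_bigr do rewrite -sum1dep_card.
rewrite (exchange_big_dep (mem Y)) /=; last by move=> i j _ /andP[].
by apply: eq_bigr => j jY; apply: eq_bigl => i; rewrite jY.
Qed.

Section Counting.

Variable U : finType.
Implicit Types (X Y P : {set U}) (k : nat).

Definition ksubsets (X : {set U}) k := [set P : {set U} | P \subset X & #|P| == k].

Lemma card_ksubsets X k : #|ksubsets X k| = 'C(#|X|, k).
Proof. exact: cards_draws. Qed.

Lemma ksubsets_subset X Y k :
  Y \subset X -> [set P in ksubsets X k | P \subset Y] = ksubsets Y k.
Proof.
move=> sYX; apply/setP=> P; rewrite !inE andbAC.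
case sPY: (P \subset Y); last by rewrite andbF.
by rewrite (subset_trans sPY sYX).
Qed.

Lemma card_ksupersets X P :
  P \subset X -> #|[set S in ksubsets X #|P|.+1 | P \subset S]| = #|X| - #|P|.
Proof.
move=> sPX.
have -> : [set S in ksubsets X #|P|.+1 | P \subset S] = (fun x => x |: P) @: (X :\: P).
  apply/setP=> S; rewrite !inE; apply/idP/imsetP.
  - case/andP=> /andP[sSX /eqP cardS] sPS.
    have /cards1P[x defx] : #|S :\: P| == 1.
      by rewrite cardsD (setIidPr sPS) cardS subSnn.
    have xSP : x \in S :\: P by rewrite defx set11.
    exists x; first by move: xSP; rewrite !inE => /andP[-> /(subsetP sSX)].
    by rewrite -(setID S P) (setIidPr sPS) defx setUC.
  - case=> x; rewrite inE => /andP[xNP xX] ->.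
    by rewrite subUset sub1set xX sPX cardsU1 xNP add1n eqxx subsetU1.
rewrite card_in_imset ?cardsD ?(setIidPr sPX) // => x y.
rewrite !inE => /andP[xNP _] _ eq_xy.
by move: (setU11 x P); rewrite eq_xy !inE (negbTE xNP) orbF => /eqP.
Qed.

End Counting.

Section Matchings.

Variable T : finType.
Implicit Types (F M : {set {set T}}) (A B E : {set T}).

Definition blocks_met M E := [set A in M | E :&: A != set0].

Lemma blocks_met_sub M E : blocks_met M E \subset M.
Proof. by apply/subsetP=> A; rewrite inE => /andP[]. Qed.

Lemma matching_trivIset F M : matching_of F M -> trivIset M.
Proof. by case=> _ disjM; apply/trivIsetP=> A B; apply: disjM. Qed.

Lemma mem_blocks_met M E x : x \in E -> x \in cover M -> pblock M x \in blocks_met M E.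
Proof.
move=> xE xM; rewrite inE pblock_mem //=.
by apply/set0Pn; exists x; rewrite inE xE mem_pblock.
Qed.

Lemma card_blocks_met M E :
  trivIset M -> {in M, forall A, #|E :&: A| <= 1} ->
  #|blocks_met M E| = #|E :&: XM M|.
Proof.
move=> trivM meet1.
have -> : blocks_met M E = pblock M @: (E :&: XM M).
  apply/setP=> A; apply/idP/imsetP=> [|[x /setIP[xE xM] ->]]; last first.
    exact: mem_blocks_met.
  rewrite inE => /andP[AM /set0Pn[x /setIP[xE xA]]].
  exists x; last by rewrite (def_pblock trivM AM xA).
  by rewrite inE xE; apply/bigcupP; exists A.
apply: card_in_imset => x y /setIP[xE xM] /setIP[yE yM] eq_xy.
have /card_le1_eqP : #|E :&: pblock M x| <= 1 by rewrite meet1 ?pblock_mem.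
by apply; rewrite inE; [rewrite yE eq_xy mem_pblock yM | rewrite xE mem_pblock xM].
Qed.

Lemma card_linear_meeting F A B :
  linear_family F -> [disjoint A & B] ->
  #|[set E in F | (E :&: A != set0) && (E :&: B != set0)]| <= #|A| * #|B|.
Proof.
move=> linF disjAB; set G := [set E in F | _].
have [A0 | [a0 _]] := set_0Vmem A.
  rewrite (_ : G = set0) ?cards0 //; apply/setP=> E.
  by rewrite !inE A0 setI0 eqxx andbF.
pose ends E := (odflt a0 [pick x in E :&: A], odflt a0 [pick y in E :&: B]).
have endsP E : E \in G ->
    [/\ E \in F, (ends E).1 \in E :&: A & (ends E).2 \in E :&: B].
  case/setIdP=> EF /andP[/set0Pn[x xEA] /set0Pn[y yEB]]; split=> //=.
    by case: pickP => [x' // | /(_ x) /=]; rewrite xEA.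
  by case: pickP => [y' // | /(_ y) /=]; rewrite yEB.
rewrite -cardsX -(card_in_imset (f := ends)); last first.
  move=> E E' /endsP[EF /setIP[xE xA] /setIP[yE yB]].
  move=> /endsP[E'F /setIP[xE' _] /setIP[yE' _]] eq_ends.
  apply: contraTeq (disjAB) => neqE; rewrite -setI_eq0; apply/set0Pn.
  have xEE' : (ends E).1 \in E :&: E' by rewrite inE xE eq_ends.
  have yEE' : (ends E).2 \in E :&: E' by rewrite inE yE eq_ends.
  exists (ends E).1; rewrite inE xA.
  by rewrite -(card_le1_eqP (linF E E' EF E'F neqE) _ _ xEE' yEE').
apply/subset_leq_card/subsetP=> _ /imsetP[E /endsP[_ /setIP[_ xA] /setIP[_ yB]] ->].
by rewrite inE xA.
Qed.

Section UniformLinearMatching.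

Variables F M : {set {set T}}.
Hypotheses (unifF : uniform3 F) (linF : linear_family F) (matchM : matching_of F M).

Lemma card_setI_block_le1 E A : E \in F -> E \notin M -> A \in M -> #|E :&: A| <= 1.
Proof.
move=> EF ENM AM; apply: linF => //; first exact: (subsetP matchM.1).
by apply: contraNneq ENM => ->.
Qed.

Lemma card_blocks_met_Di i E : E \in Di F M i -> E \notin M -> #|blocks_met M E| = i.
Proof.
rewrite inE => /andP[EF /eqP <-] ENM.
by apply: card_blocks_met (matching_trivIset matchM) _ => A; apply: card_setI_block_le1.
Qed.

Lemma Di2_notin_matching E : E \in Di F M 2 -> E \notin M.
Proof.
rewrite inE => /andP[EF cardE]; apply: contraTN cardE => EM.
by rewrite (setIidPl (bigcup_sup E EM)) unifF.
Qed.

Lemma card_blocks_met_Di2 E : E \in Di F M 2 -> #|blocks_met M E| = 2.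
Proof. by move=> ED; rewrite (card_blocks_met_Di ED) ?Di2_notin_matching. Qed.

Lemma card_meeting_pair P (D : {set {set T}}) : D \subset F -> P \in ksubsets M 2 ->
  #|[set E in D | P \subset blocks_met M E]| <= 9.
Proof.
move=> sDF; rewrite inE => /andP[sPM /cards2P[A [B [neqAB defP]]]].
have [AM BM] : A \in M /\ B \in M.
  by split; apply: (subsetP sPM); rewrite defP !inE eqxx ?orbT.
have card3 C : C \in M -> #|C| = 3 by move/(subsetP matchM.1); apply: unifF.
have -> : 9 = #|A| * #|B| by rewrite !card3.
apply: leq_trans _ (card_linear_meeting linF (matchM.2 A B AM BM neqAB)).
apply/subset_leq_card/subsetP=> E; rewrite !inE defP subUset !sub1set !inE.
by case/andP=> ED /andP[/andP[_ ->] /andP[_ ->]]; rewrite (subsetP sDF).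
Qed.

Section TripleBound.

Hypothesis bound21 : forall A B C, A \in M -> B \in M -> C \in M ->
  A != B -> A != C -> B != C -> #|D2abc F M A B C| <= 21.

Lemma card_meeting_triple S :
  S \in ksubsets M 3 -> #|[set E in Di F M 2 | blocks_met M E \subset S]| <= 21.
Proof.
rewrite inE => /andP[sSM /eqP cardS].
have /card_gt2P[A [B [C [[AS BS CS] [neqAB neqBC neqCA]]]]] : 2 < #|S| by rewrite cardS.
have defS : S = [set A; B; C].
  apply/esym/eqP; rewrite eqEcard cardS !subUset !sub1set AS BS CS /=.
  by rewrite setUC cardsU1 cards2 !inE negb_or neqCA (eq_sym C) neqBC neqAB.
have [AM BM CM] : [/\ A \in M, B \in M & C \in M] by rewrite !(subsetP sSM).
have neqAC : A != C by rewrite eq_sym.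
apply: leq_trans _ (bound21 AM BM CM neqAB neqAC neqBC).
apply/subset_leq_card/subsetP=> E; rewrite !inE => /andP[/andP[EF /eqP cardE] sES].
rewrite EF cardE eqxx /= -cardE; apply/eqP/eq_card.
apply/subset_eqP/andP; split; first by rewrite setIS // !subUset !bigcup_sup.
apply/subsetP=> x /setIP[xE xM]; rewrite inE xE.
have := subsetP sES _ (mem_blocks_met xE xM); rewrite defS !inE -!orbA.
by case/or3P=> /eqP <-; rewrite mem_pblock xM ?orbT.
Qed.

Lemma card_Di2_le :
  #|Di F M 2| * (#|M| - 2) <= 'C(#|M|, 3) * 21.
Proof.
rewrite -card_ksubsets -!sum_nat_const.
rewrite (eq_bigr (fun E => #|[set S in ksubsets M 3 | blocks_met M E \subset S]|)); last first.
  move=> E /card_blocks_met_Di2 card2.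
  by rewrite -card2 card_ksupersets ?blocks_met_sub // card2.
rewrite -double_counting; apply: leq_sum => S SM.
exact: card_meeting_triple.
Qed.

End TripleBound.

Lemma card_Di2_Di3_le :
  #|Di F M 2| * 1 + #|Di F M 3 :\: M| * 3 <= 'C(#|M|, 2) * 9.
Proof.
set D2 := Di F M 2; set D3 := Di F M 3 :\: M.
have disjD : [disjoint D2 & D3].
  by rewrite disjoint_subset; apply/subsetP=> E; rewrite !inE => /andP[_ /eqP->] /=; rewrite !andbF.
have sDF : D2 :|: D3 \subset F.
  by apply/subsetP=> E; rewrite !inE => /orP[/andP[] | /andP[_ /andP[]]].
have -> : #|D2| * 1 + #|D3| * 3 =
    \sum_(E in D2 :|: D3) #|[set P in ksubsets M 2 | P \subset blocks_met M E]|.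
  rewrite (eq_bigl [predU D2 & D3]) => [|E]; last by rewrite inE.
  rewrite bigU // -!sum_nat_const; congr (_ + _); apply: eq_bigr => E ED;
    rewrite ksubsets_subset ?blocks_met_sub // card_ksubsets.
  - by rewrite card_blocks_met_Di2.
  - by move: ED; rewrite inE => /andP[ENM /card_blocks_met_Di ->].
rewrite -card_ksubsets -sum_nat_const -double_counting; apply: leq_sum => P PM.
exact: card_meeting_pair.
Qed.

End UniformLinearMatching.

End Matchings.

Import GRing.Theory Num.Theory.
Local Open Scope ring_scope.

Theorem proposition9 (T : finType) (F M : {set {set T}}) :
  uniform3 F -> linear_family F -> matching_of F M ->
  (3 <= #|M|)%N ->
  (forall A B C, A \in M -> B \in M -> C \in M ->
      A != B -> A != C -> B != C -> (#|D2abc F M A B C| <= 21)%N) ->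
  ((#|Di F M 2| + #|Di F M 3 :\: M|)%:R : rat)
    <= 23%:R / (#|M| - 2)%:R * ('C(#|M|, 3))%:R.
Proof.
move=> unifF linF matchM n_ge3 bound21.
have pairs := card_Di2_Di3_le unifF linF matchM.
have triples := card_Di2_le unifF linF matchM bound21.
have binom : (3 * 'C(#|M|, 3) = (#|M| - 2) * 'C(#|M|, 2))%N by rewrite mul_bin_left.
rewrite mulrAC -natrM ler_pdivlMr ?ltr0n ?subn_gt0 // -natrM ler_nat.
set m := (#|M| - 2)%N in triples binom *; nia.
Qed.
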